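(* Let $d\ge2$, let $(c_t)_{t=0}^\infty\subset\mathbb{S}^{d-1}$ be a sequence of unit vectors and let $\omega:\mathsf{P}^d_+\to\mathbb{R}_{\ge0}$ be a function such that $\omega(X)\le C\sqrt{\lambda_{\max}(X)}$ for all $X\in\mathsf{P}^d_+$, for some constant $C>0$. Let $\lambda_0\ge\max\Big\{2,\ \sqrt{\tfrac{2}{3(d-1)}}\,2dC+\tfrac{2}{3(d-1)}\Big\}$ and define matrices $V_t\in\mathbb{R}^{d\times d}$ by $$V_0=\lambda_0\mathbb{I}_{d\times d},\qquad V_{t+1}=V_t+\omega(V_t)\sum_{i=1}^{d-1}P_{t,i},$$ where $P_{t,i}=a^+_{t+1,i}(a^+_{t+1,i})^{\mathsf T}+a^-_{t+1,i}(a^-_{t+1,i})^{\mathsf T}$, $a^\pm_{t+1,i}=\tilde a^\pm_{t+1,i}/\|\tilde a^\pm_{t+1,i}\|_2$, $\tilde a^\pm_{t+1,i}=c_t\pm\frac{1}{\sqrt{\lambda_{t,1}}}v_{t,i}$, and $\lambda_{t,1}\le\lambda_{t,2}\le\dots\le\lambda_{t,d}$ are the eigenvalues of $V_t$ with corresponding orthonormal eigenvectors $v_{t,1},\dots,v_{t,d}$. Then $$\lambda_{\min}(V_t)\ge\sqrt{\frac{2}{3(d-1)}\lambda_{\max}(V_t)}\qquad\text{for all }t\ge0.$$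
   Context: $\mathsf{P}^d_+$ is the set of real positive semidefinite $d\times d$ matrices; $\lambda_{\min}$, $\lambda_{\max}$ denote minimal and maximal eigenvalue; $\mathbb{S}^{d-1}$ is the unit sphere of $\mathbb{R}^d$. *)

From HB Require Import structures.
From mathcomp Require Import all_boot all_order all_algebra.
From mathcomp Require Import boolp classical_sets reals.
Set Implicit Arguments. Unset Strict Implicit. Unset Printing Implicit Defensive.
Import Order.TTheory GRing.Theory Num.Theory.
Local Open Scope ring_scope.
Local Open Scope classical_set_scope.

Definition psd (R : realType) (d : nat) (X : 'M[R]_d) : Prop :=
  X^T = X /\ forall v : 'cV[R]_d, 0 <= (v^T *m X *m v) 0 0.

Definition lambda_min (R : realType) (d : nat) (X : 'M[R]_d) : R :=
  inf [set a : R | eigenvalue X a].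
Definition lambda_max (R : realType) (d : nat) (X : 'M[R]_d) : R :=
  sup [set a : R | eigenvalue X a].

Definition norm2 (R : realType) (d : nat) (v : 'cV[R]_d) : R :=
  Num.sqrt ((v^T *m v) 0 0).

Definition proj_normalized (R : realType) (d : nat) (at_ : 'cV[R]_d) : 'M[R]_d :=
  let a := (norm2 at_)^-1 *: at_ in a *m a^T.

From HB Require Import structures.
From mathcomp Require Import all_boot all_order all_algebra.
From mathcomp Require Import boolp classical_sets reals.
From mathcomp Require Import ring lra.
Import Order.TTheory GRing.Theory Num.Theory.
Local Open Scope ring_scope.

Set Implicit Arguments. Unset Strict Implicit. Unset Printing Implicit Defensive.

(* Write mu_t and M_t for the smallest and largest eigenvalue of V_t, w_t for
   omega(V_t) and k = 2/(3(d-1)); we show by induction that lambda0 <= mu_t and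
   k M_t <= mu_t^2.  Each pair P_{t,i} has quadratic form at most 2|x|^2, so
   k M_{t+1} <= k M_t + (4/3) w_t.  For a unit vector x with squared coordinate b
   along the top eigenvector of V_t, the pair P_{t,i} contributes at least
   g (x.v_{t,i})^2 with g = 2/(1 + sqrt mu_t)^2, hence
   mu_{t+1} >= (mu_t + w_t g)(1 - b) + M_t b >= min(mu_t + w_t g, M_t).
   If mu_{t+1} >= mu_t + w_t g, then mu_t g >= 2/3 makes mu_{t+1}^2 grow by at
   least (4/3) w_t; if mu_{t+1} >= M_t, the choice of lambda0 together with
   w_t <= C sqrt M_t gives M_t^2 >= k M_t + (4/3) w_t. *)

Section Dot.
Variables (R : realFieldType) (n : nat).
Implicit Types (u w x : 'cV[R]_n).

Definition dot u w := (u^T *m w) 0 0.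

Lemma dotE u w : dot u w = \sum_i u i 0 * w i 0.
Proof. by rewrite /dot mxE; apply: eq_bigr => i _; rewrite mxE. Qed.

Lemma dotC u w : dot u w = dot w u.
Proof. by rewrite !dotE; apply: eq_bigr => i _; rewrite mulrC. Qed.

Lemma dot0r u : dot u 0 = 0.
Proof. by rewrite /dot mulmx0 mxE. Qed.

Lemma dotDr u w x : dot u (w + x) = dot u w + dot u x.
Proof. by rewrite /dot mulmxDr mxE. Qed.

Lemma dotZr a u w : dot u (a *: w) = a * dot u w.
Proof. by rewrite /dot -scalemxAr mxE. Qed.

Lemma dotNr u w : dot u (- w) = - dot u w.
Proof. by rewrite -scaleN1r dotZr mulN1r. Qed.

Lemma dotBr u w x : dot u (w - x) = dot u w - dot u x.
Proof. by rewrite dotDr dotNr. Qed.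

Lemma dotDl u w x : dot (w + x) u = dot w u + dot x u.
Proof. by rewrite dotC dotDr !(dotC u). Qed.

Lemma dotZl a u w : dot (a *: w) u = a * dot w u.
Proof. by rewrite dotC dotZr dotC. Qed.

Lemma dotBl u w x : dot (w - x) u = dot w u - dot x u.
Proof. by rewrite dotC dotBr !(dotC u). Qed.

Lemma dot_sumr I (r : seq I) (P : pred I) (F : I -> 'cV[R]_n) u :
  dot u (\sum_(i <- r | P i) F i) = \sum_(i <- r | P i) dot u (F i).
Proof. by rewrite /dot mulmx_sumr summxE. Qed.

Lemma dotxx_ge0 u : 0 <= dot u u.
Proof. by rewrite dotE sumr_ge0 // => i _; rewrite -expr2 sqr_ge0. Qed.

Lemma dotxx_eq0 u : (dot u u == 0) = (u == 0).
Proof.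
apply/idP/eqP => [|->]; last by rewrite dot0r.
rewrite dotE psumr_eq0 => [/allP u0|i _]; last by rewrite -expr2 sqr_ge0.
apply/matrixP => i j; rewrite (ord1 j) mxE.
by have /= := u0 i (mem_index_enum _); rewrite mulf_eq0 orbb => /eqP.
Qed.

Lemma dot_CauchySchwarz u w : dot u w ^+ 2 <= dot u u * dot w w.
Proof.
have [w0|wn0] := eqVneq w 0; first by rewrite w0 !dot0r expr0n mulr0.
have w_gt0 : 0 < dot w w by rewrite lt_def dotxx_eq0 wn0 dotxx_ge0.
have := dotxx_ge0 (dot w w *: u - dot u w *: w).
rewrite !(dotBl, dotBr, dotZl, dotZr) (dotC w u).
set a := dot u w; set b := dot w w; set e := dot u u.
have -> : b * (b * e - a * a) - a * (b * a - a * b) = b * (e * b - a ^+ 2) by ring.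
by rewrite pmulr_rge0 // subr_ge0.
Qed.

End Dot.

Section OrthonormalEigenbasis.
Variables (R : realType) (d : nat) (V : 'M[R]_d) (lam : nat -> R) (vec : nat -> 'cV[R]_d).
Hypothesis d_gt0 : (0 < d)%N.
Hypothesis V_vec : forall i, (i < d)%N -> V *m vec i = lam i *: vec i.
Hypothesis vec_orthonormal :
  forall i j, (i < d)%N -> (j < d)%N -> dot (vec i) (vec j) = (i == j)%:R.
Hypothesis lam_sorted : forall i j, (i <= j)%N -> (j < d)%N -> lam i <= lam j.

Lemma big_nat_recr_pred (F : nat -> R) :
  \sum_(0 <= j < d) F j = \sum_(0 <= j < d.-1) F j + F d.-1.
Proof. by rewrite -{1}(prednK d_gt0) big_nat_recr. Qed.

Lemma pred_lt_dim : (d.-1 < d)%N.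
Proof. by rewrite ltn_predL. Qed.

Lemma lam_min_le i : (i < d)%N -> lam 0 <= lam i.
Proof. exact: lam_sorted. Qed.

Lemma lam_le_max i : (i < d)%N -> lam i <= lam d.-1.
Proof. by move=> id; apply: lam_sorted; rewrite ?prednK // -ltnS prednK. Qed.

Lemma eigenbasis_expansion x : x = \sum_(0 <= j < d) dot (vec j) x *: vec j.
Proof.
set Q := \matrix_(a < d, j < d) vec j a 0.
have QtQ : Q^T *m Q = 1%:M.
  apply/matrixP => i j; rewrite mxE [RHS]mxE -[i == j]/(i == j :> nat).
  by rewrite -vec_orthonormal // dotE; apply: eq_bigr => a _; rewrite !mxE.
suff -> : \sum_(0 <= j < d) dot (vec j) x *: vec j = Q *m (Q^T *m x).
  by rewrite mulmxA (mulmx1C QtQ) mul1mx.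
apply/matrixP => a b; rewrite summxE big_mkord mxE; apply: eq_bigr => j _.
rewrite !mxE mulrC (ord1 b) dotE; congr (_ * _); apply: eq_bigr => k _.
by rewrite !mxE.
Qed.

Lemma dot_Parseval x : dot x x = \sum_(0 <= j < d) dot (vec j) x ^+ 2.
Proof.
rewrite {2}(eigenbasis_expansion x) dot_sumr; apply: eq_bigr => j _.
by rewrite dotZr [dot x _]dotC expr2.
Qed.

Lemma quad_form_eigen x : dot x (V *m x) = \sum_(0 <= j < d) lam j * dot (vec j) x ^+ 2.
Proof.
rewrite {2}(eigenbasis_expansion x) mulmx_sumr dot_sumr.
apply: eq_big_nat => j /andP[_ jd].
by rewrite -scalemxAr V_vec // scalerA dotZr [dot x _]dotC; ring.
Qed.

Lemma dot_vec_sqr_le x j : (j < d)%N -> dot (vec j) x ^+ 2 <= dot x x.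
Proof.
move=> jd; rewrite dot_Parseval (@big_cat_nat _ _ _ j 0 d) ?(ltnW jd) //=.
rewrite [X in _ + X]big_ltn //= addrCA lerDl.
by rewrite addr_ge0 // sumr_ge0 // => i _; rewrite sqr_ge0.
Qed.

Lemma quad_form_ge x :
  lam 0 * (dot x x - dot (vec d.-1) x ^+ 2) + lam d.-1 * dot (vec d.-1) x ^+ 2
  <= dot x (V *m x).
Proof.
rewrite quad_form_eigen dot_Parseval !big_nat_recr_pred addrK lerD2r mulr_sumr.
apply: ler_sum_nat => j /andP[_ jd]; rewrite ler_wpM2r ?sqr_ge0 ?lam_min_le //.
exact: leq_trans jd (leq_pred d).
Qed.

Lemma quad_form_le x : dot x (V *m x) <= lam d.-1 * dot x x.
Proof.
rewrite quad_form_eigen dot_Parseval mulr_sumr; apply: ler_sum_nat => j /andP[_ jd].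
by rewrite ler_wpM2r ?sqr_ge0 ?lam_le_max.
Qed.

Lemma psd_eigen : V^T = V -> 0 <= lam 0 -> psd V.
Proof.
move=> V_sym lam0_ge0; split=> // x; rewrite -mulmxA -/(dot x _) quad_form_eigen.
rewrite big_nat_cond; apply: sumr_ge0 => j /andP[/andP[_ jd] _]; rewrite mulr_ge0 ?sqr_ge0 //.
exact: le_trans lam0_ge0 (lam_min_le jd).
Qed.

Hypothesis V_sym : V^T = V.

Lemma eigenvalue_lam0 : eigenvalue V (lam 0).
Proof.
apply/eigenvalueP; exists (vec 0)^T; first by rewrite -{1}V_sym -trmx_mul V_vec // linearZ.
rewrite trmx_eq0 -dotxx_eq0 vec_orthonormal //; exact: oner_neq0.
Qed.

Lemma eigenvalue_bounds a : eigenvalue V a -> lam 0 <= a <= lam d.-1.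
Proof.
case/eigenvalueP => v Vv v_neq0; set x := v^T.
have Vx : V *m x = a *: x by rewrite /x -{1}V_sym -trmx_mul Vv linearZ.
have x_gt0 : 0 < dot x x by rewrite lt_def dotxx_eq0 trmx_eq0 v_neq0 dotxx_ge0.
have := quad_form_ge x; have := quad_form_le x; rewrite Vx dotZr => upper lower.
apply/andP; split; last by rewrite -(ler_pM2r x_gt0).
rewrite -(ler_pM2r x_gt0); apply: le_trans lower.
have gap : 0 <= lam d.-1 - lam 0 by rewrite subr_ge0 lam_min_le ?pred_lt_dim.
have := mulr_ge0 gap (sqr_ge0 (dot (vec d.-1) x)); lra.
Qed.

Lemma lambda_max_le : lambda_max V <= lam d.-1.
Proof.
apply: ge_sup; first by exists (lam 0); exact: eigenvalue_lam0.
by move=> a /eigenvalue_bounds /andP[].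
Qed.

Lemma lambda_min_ge : lam 0 <= lambda_min V.
Proof.
apply: lb_le_inf; first by exists (lam 0); exact: eigenvalue_lam0.
by move=> a /eigenvalue_bounds /andP[].
Qed.

End OrthonormalEigenbasis.

Section ProjNormalized.
Variables (R : realType) (n : nat).
Implicit Types (w x : 'cV[R]_n).

Lemma proj_normalized_sym w : (proj_normalized w)^T = proj_normalized w.
Proof. by rewrite /proj_normalized trmx_mul trmxK. Qed.

Lemma quad_proj_normalized w x :
  dot x (proj_normalized w *m x) = dot x w ^+ 2 / dot w w.
Proof.
rewrite /proj_normalized -mulmxA [_^T *m x]mx11_scalar mul_mx_scalar.
rewrite -/(dot _ x) linearZ /= !(dotZl, dotZr) [dot w x]dotC /norm2 -/(dot w w).
rewrite -[dot w w in RHS]sqr_sqrtr ?dotxx_ge0 // -exprVn; ring.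
Qed.

Lemma quad_proj_normalized_le w x : dot x (proj_normalized w *m x) <= dot x x.
Proof.
rewrite quad_proj_normalized; have [->|w_neq0] := eqVneq w 0.
  by rewrite !dot0r invr0 mulr0 dotxx_ge0.
have w_gt0 : 0 < dot w w by rewrite lt_def dotxx_eq0 w_neq0 dotxx_ge0.
by rewrite ler_pdivrMr // dot_CauchySchwarz.
Qed.

Lemma quad_proj_normalized_ge w x s : dot w w <= s ->
  dot x w ^+ 2 / s <= dot x (proj_normalized w *m x).
Proof.
move=> ws; rewrite quad_proj_normalized; have [->|w_neq0] := eqVneq w 0.
  by rewrite !dot0r expr0n /= !mul0r.
have w_gt0 : 0 < dot w w by rewrite lt_def dotxx_eq0 w_neq0 dotxx_ge0.
by rewrite ler_wpM2l ?sqr_ge0 // lef_pV2 ?posrE // (lt_le_trans w_gt0).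
Qed.

Variables (c v : 'cV[R]_n).
Hypotheses (c_unit : dot c c = 1) (v_unit : dot v v = 1).

Lemma dot_shift_le t : dot (c + t *: v) (c + t *: v) <= (1 + `|t|) ^+ 2.
Proof.
have cv_le1 : `|dot c v| <= 1.
  rewrite -(expr_le1 (n := 2)) ?normr_ge0 // real_normK ?num_real //.
  by have := dot_CauchySchwarz c v; rewrite c_unit v_unit mulr1.
have : t * dot c v <= `|t| by rewrite (le_trans (ler_norm _)) // normrM ler_piMr.
rewrite !(dotDl, dotDr, dotZl, dotZr) c_unit v_unit [dot v c]dotC.
rewrite sqrrD expr1n real_normK ?num_real //.
lra.
Qed.

Lemma quad_proj_pair_le s x :
  dot x ((proj_normalized (c + s *: v) + proj_normalized (c - s *: v)) *m x) <= 2 * dot x x.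
Proof. by rewrite mulmxDl dotDr mulr2n mulrDl mul1r lerD ?quad_proj_normalized_le. Qed.

Lemma quad_proj_pair_ge r x : 0 < r ->
  2 / (1 + r) ^+ 2 * dot x v ^+ 2 <=
  dot x ((proj_normalized (c + r^-1 *: v) + proj_normalized (c - r^-1 *: v)) *m x).
Proof.
move=> r_gt0; set s := r^-1; have s_gt0 : 0 < s by rewrite invr_gt0.
have plus := quad_proj_normalized_ge x (dot_shift_le s).
have minus := quad_proj_normalized_ge x (dot_shift_le (- s)).
rewrite normrN gtr0_norm // scaleNr in plus minus.
rewrite mulmxDl dotDr; apply: le_trans (lerD plus minus).
have -> : 2 / (1 + r) ^+ 2 = 2 * s ^+ 2 / (1 + s) ^+ 2.
  by rewrite /s; field; rewrite !gt_eqF // addr_gt0.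
rewrite -mulrDl mulrAC ler_wpM2r ?invr_ge0 ?sqr_ge0 // dotDr dotBr !dotZr.
have := sqr_ge0 (dot x c); lra.
Qed.

End ProjNormalized.

Lemma min_le_convex (R : realDomainType) (a b t : R) :
  0 <= t <= 1 -> Num.min a b <= a * (1 - t) + b * t.
Proof.
case/andP=> t_ge0 t_le1; have [ab|ba] := leP a b.
  have : 0 <= t * (b - a) by rewrite mulr_ge0 // subr_ge0.
  lra.
have : 0 <= (1 - t) * (a - b) by rewrite mulr_ge0 // subr_ge0 // ltW.
lra.
Qed.

Definition pair_gain (R : rcfType) (mu : R) := 2 / (1 + Num.sqrt mu) ^+ 2.

Lemma pair_gain_ge0 (R : rcfType) (mu : R) : 0 <= pair_gain mu.
Proof. by rewrite divr_ge0 ?sqr_ge0. Qed.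

Lemma pair_gain_ge (R : rcfType) (mu : R) : 2 <= mu -> 2 / 3 <= mu * pair_gain mu.
Proof.
move=> mu_ge2; rewrite /pair_gain; set m := Num.sqrt mu.
have m_ge0 : 0 <= m := sqrtr_ge0 mu.
have m2 : m ^+ 2 = mu by rewrite sqr_sqrtr //; lra.
have m_gt : 7 / 5 <= m by nra.
rewrite mulrA ler_pdivlMr ?exprn_gt0 ?ltr_wpDr //.
rewrite -m2; nra.
Qed.

Lemma sqr_growth_gain (R : realFieldType) (k M mu om g mu' : R) :
  k * M <= mu ^+ 2 -> 0 <= mu -> 0 <= om -> 0 <= g -> 2 / 3 <= mu * g ->
  mu + om * g <= mu' -> k * M + 4 / 3 * om <= mu' ^+ 2.
Proof.
move=> kM mu_ge0 om_ge0 g_ge0 gain le_mu'.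
have gain_om : 4 / 3 * om <= 2 * (mu * g) * om by rewrite ler_wpM2r //; lra.
have og_ge0 : 0 <= om * g by rewrite mulr_ge0.
have sqr_le : (mu + om * g) ^+ 2 <= mu' ^+ 2.
  by rewrite ler_pXn2r ?nnegrE //; lra.
have := sqr_ge0 (om * g); rewrite sqrrD in sqr_le; lra.
Qed.

Lemma sqr_growth_top (R : rcfType) (D k C l0 M om : R) :
  2 <= D -> k * (3 * (D - 1)) = 2 -> 0 <= C -> Num.sqrt k * 2 * D * C + k <= l0 ->
  2 <= l0 -> l0 <= M -> om <= C * Num.sqrt M -> k * M + 4 / 3 * om <= M ^+ 2.
Proof.
move=> D_ge2 k_def C_ge0 l0_ge l0_ge2 l0_le om_le.
have k_ge0 : 0 <= k by rewrite -(pmulr_lge0 _ (_ : 0 < 3 * (D - 1))) ?k_def //; lra.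
set X := Num.sqrt k * 2 * D * Num.sqrt M.
have X_ge0 : 0 <= X by rewrite !mulr_ge0 ?sqrtr_ge0 //; lra.
have X2 : X ^+ 2 * (3 * (D - 1)) = 8 * D ^+ 2 * M.
  rewrite /X !exprMn !sqr_sqrtr //; last lra.
  transitivity (4 * D ^+ 2 * M * (k * (3 * (D - 1)))); first ring.
  by rewrite k_def; ring.
have X_ge : 4 / 3 <= X.
  have X2_ge : 16 / 9 <= X ^+ 2.
    rewrite -(ler_pM2r (_ : 0 < 3 * (D - 1))) ?X2; last lra.
    have : 8 * D ^+ 2 * 2 <= 8 * D ^+ 2 * M by rewrite ler_wpM2l ?mulr_ge0 ?sqr_ge0; lra.
    nra.
  nra.
have om_X : 4 / 3 * om <= C * Num.sqrt M * X.
  apply: le_trans (_ : 4 / 3 * (C * Num.sqrt M) <= _).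
    by rewrite ler_wpM2l //; lra.
  by rewrite mulrC ler_wpM2l // mulr_ge0 ?sqrtr_ge0.
have M_sq : C * Num.sqrt M * X = Num.sqrt k * 2 * D * C * M.
  by rewrite /X -[M in RHS]sqr_sqrtr ?expr2; [ring | lra].
have : M * (Num.sqrt k * 2 * D * C) <= M * (M - k).
  by rewrite ler_wpM2l; lra.
lra.
Qed.

Lemma invariant_step (R : rcfType) (D k C l0 mu M om mu' M' : R) :
  2 <= D -> k * (3 * (D - 1)) = 2 -> 0 <= C -> Num.sqrt k * 2 * D * C + k <= l0 ->
  2 <= l0 -> l0 <= mu -> mu <= M -> k * M <= mu ^+ 2 ->
  0 <= om -> om <= C * Num.sqrt M ->
  Num.min (mu + om * pair_gain mu) M <= mu' ->
  M' <= M + om * (2 * (D - 1)) ->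
  l0 <= mu' /\ k * M' <= mu' ^+ 2.
Proof.
move=> D_ge2 k_def C_ge0 l0_ge l0_ge2 l0_le mu_le kM om_ge0 om_le mu'_ge M'_le.
have k_ge0 : 0 <= k by rewrite -(pmulr_lge0 _ (_ : 0 < 3 * (D - 1))) ?k_def //; lra.
have og_ge0 : 0 <= om * pair_gain mu by rewrite mulr_ge0 ?pair_gain_ge0.
have kM' : k * M' <= k * M + 4 / 3 * om.
  have k_gain : k * (2 * (D - 1)) = 4 / 3.
    transitivity (2 / 3 * (k * (3 * (D - 1)))); first by field.
    by rewrite k_def; field.
  by have := ler_wpM2l k_ge0 M'_le; rewrite mulrDr mulrCA k_gain [om * _]mulrC.
move: mu'_ge; rewrite ge_min => /orP[] mu'_ge; split; try lra.
  apply: le_trans kM' (sqr_growth_gain kM _ om_ge0 (pair_gain_ge0 mu) _ mu'_ge); first lra.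
  by apply: pair_gain_ge; lra.
apply: le_trans kM' (le_trans (sqr_growth_top D_ge2 k_def C_ge0 l0_ge l0_ge2 _ om_le) _).
  exact: le_trans l0_le mu_le.
by rewrite ler_pXn2r ?nnegrE //; lra.
Qed.

Section Iteration.
Variables (R : realType) (d : nat) (c : nat -> 'cV[R]_d) (omega : 'M[R]_d -> R).
Variables (C lambda0 : R) (V : nat -> 'M[R]_d).
Variables (lam : nat -> nat -> R) (vec : nat -> nat -> 'cV[R]_d).
Hypothesis d_ge2 : (2 <= d)%N.
Hypothesis c_norm : forall t, norm2 (c t) = 1.
Hypothesis C_gt0 : 0 < C.
Hypothesis omega_bound :
  forall X : 'M[R]_d, psd X -> 0 <= omega X /\ omega X <= C * Num.sqrt (lambda_max X).
Hypothesis lambda0_ge2 : 2 <= lambda0.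
Hypothesis lambda0_ge :
  Num.sqrt (2 / (3 * (d%:R - 1))) * 2 * d%:R * C + 2 / (3 * (d%:R - 1)) <= lambda0.
Hypothesis V0 : V 0%N = lambda0%:M.
Hypothesis V_vec : forall t i, (i < d)%N -> V t *m vec t i = lam t i *: vec t i.
Hypothesis vec_orthonormal :
  forall t i j, (i < d)%N -> (j < d)%N -> dot (vec t i) (vec t j) = (i == j)%:R.
Hypothesis lam_sorted : forall t i j, (i <= j)%N -> (j < d)%N -> lam t i <= lam t j.
Local Notation P t i :=
  (proj_normalized (c t + (Num.sqrt (lam t 0%N))^-1 *: vec t i)
   + proj_normalized (c t - (Num.sqrt (lam t 0%N))^-1 *: vec t i)).
Hypothesis V_succ : forall t, V t.+1 = V t + omega (V t) *: \sum_(0 <= i < d.-1) P t i.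

Let d_gt0 : (0 < d)%N := ltnW d_ge2.

Lemma c_unit t : dot (c t) (c t) = 1.
Proof.
have := c_norm t; rewrite /norm2 -/(dot _ _) => norm1.
by rewrite -(sqr_sqrtr (dotxx_ge0 (c t))) norm1 expr1n.
Qed.

Lemma V_sym t : (V t)^T = V t.
Proof.
elim: t => [|t IH]; first by rewrite V0 tr_scalar_mx.
rewrite V_succ linearD linearZ /= IH linear_sum; congr (_ + _ *: _).
by apply: eq_bigr => i _; rewrite linearD /= !proj_normalized_sym.
Qed.

Lemma lam_quad_form t i : (i < d)%N -> lam t i = dot (vec t i) (V t *m vec t i).
Proof. by move=> id; rewrite V_vec // dotZr vec_orthonormal // eqxx mulr1. Qed.

Lemma quad_form_succ t x : dot x (V t.+1 *m x) =
  dot x (V t *m x) + omega (V t) * \sum_(0 <= i < d.-1) dot x (P t i *m x).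
Proof. by rewrite V_succ mulmxDl dotDr -scalemxAl dotZr mulmx_suml dot_sumr. Qed.

Lemma lam_min_succ t : 0 < lam t 0 -> 0 <= omega (V t) ->
  Num.min (lam t 0 + omega (V t) * pair_gain (lam t 0)) (lam t d.-1) <= lam t.+1 0.
Proof.
move=> mu_gt0 om_ge0; set g := pair_gain _; set x := vec t.+1 0.
have x_unit : dot x x = 1 by rewrite vec_orthonormal.
set b := dot (vec t d.-1) x ^+ 2.
have b_in01 : 0 <= b <= 1.
  by rewrite sqr_ge0 -x_unit (dot_vec_sqr_le (vec_orthonormal t)) ?pred_lt_dim.
have coord_rest : \sum_(0 <= i < d.-1) dot x (vec t i) ^+ 2 = 1 - b.
  rewrite -x_unit (dot_Parseval (vec_orthonormal t)) (big_nat_recr_pred d_gt0) addrK.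
  by apply: eq_bigr => i _; rewrite dotC.
have base : lam t 0 * (1 - b) + lam t d.-1 * b <= dot x (V t *m x).
  by rewrite -x_unit; apply: quad_form_ge d_gt0 (V_vec t) (vec_orthonormal t) (lam_sorted t) x.
have pairs : g * (1 - b) <= \sum_(0 <= i < d.-1) dot x (P t i *m x).
  rewrite -coord_rest mulr_sumr; apply: ler_sum_nat => i /andP[_ id].
  have v_unit : dot (vec t i) (vec t i) = 1.
    by rewrite vec_orthonormal ?eqxx // (leq_trans id) ?leq_pred.
  by rewrite /g quad_proj_pair_ge ?c_unit ?sqrtr_gt0.
apply: le_trans (min_le_convex _ _ b_in01) _.
rewrite [lam t.+1 0]lam_quad_form // quad_form_succ.
have := ler_wpM2l om_ge0 pairs; lra.
Qed.

Lemma lam_max_succ t : 0 <= omega (V t) ->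
  lam t.+1 d.-1 <= lam t d.-1 + omega (V t) * (2 * (d%:R - 1)).
Proof.
move=> om_ge0; set y := vec t.+1 d.-1.
have y_unit : dot y y = 1 by rewrite vec_orthonormal ?eqxx ?pred_lt_dim.
rewrite [lam t.+1 d.-1]lam_quad_form ?pred_lt_dim // quad_form_succ; apply: lerD.
  have := quad_form_le d_gt0 (V_vec t) (vec_orthonormal t) (lam_sorted t) y.
  by rewrite y_unit mulr1.
rewrite ler_wpM2l //.
have -> : 2 * (d%:R - 1) = \sum_(0 <= i < d.-1) 2 * dot y y.
  have pred_d : d%:R - 1 = d.-1%:R :> R by rewrite -[d in LHS](prednK d_gt0) mulrSr addrK.
  by rewrite y_unit mulr1 sumr_const_nat subn0 pred_d mulr_natr.
by apply: ler_sum_nat => i _; apply: quad_proj_pair_le.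
Qed.

Lemma lam_invariant t :
  lambda0 <= lam t 0 /\ 2 / (3 * (d%:R - 1)) * lam t d.-1 <= lam t 0 ^+ 2.
Proof.
have D_ge2 : 2 <= d%:R :> R by rewrite ler_nat.
have k_def : 2 / (3 * (d%:R - 1)) * (3 * (d%:R - 1)) = 2 :> R.
  by rewrite mulfVK // gt_eqF // mulr_gt0 // subr_gt0 ltr1n.
have step := invariant_step D_ge2 k_def (ltW C_gt0) lambda0_ge lambda0_ge2.
elim: t => [|t [mu_ge M_le]].
  have lam0 i : (i < d)%N -> lam 0 i = lambda0.
    by move=> id; rewrite lam_quad_form // V0 mul_scalar_mx dotZr vec_orthonormal ?eqxx ?mulr1.
  rewrite !lam0 ?pred_lt_dim //; split=> //.
  have C_sqrt_ge0 : 0 <= C * Num.sqrt lambda0 by rewrite mulr_ge0 ?sqrtr_ge0 ?ltW.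
  have := sqr_growth_top D_ge2 k_def (ltW C_gt0) lambda0_ge lambda0_ge2 (le_refl _) C_sqrt_ge0.
  by rewrite mulr0 addr0.
have mu_le_M : lam t 0 <= lam t d.-1 by apply: lam_sorted; rewrite ?pred_lt_dim.
have mu_gt0 : 0 < lam t 0 by apply: lt_le_trans mu_ge; apply: lt_le_trans lambda0_ge2.
have V_psd : psd (V t).
  exact: psd_eigen (V_vec t) (vec_orthonormal t) (lam_sorted t) (V_sym t) (ltW mu_gt0).
have [om_ge0 om_le] := omega_bound V_psd.
apply: step mu_ge mu_le_M M_le om_ge0 _ (lam_min_succ mu_gt0 om_ge0) (lam_max_succ om_ge0).
apply: le_trans om_le (ler_wpM2l (ltW C_gt0) (ler_wsqrtr _)).
exact: lambda_max_le d_gt0 (V_vec t) (vec_orthonormal t) (lam_sorted t) (V_sym t).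
Qed.
End Iteration.

Theorem mainTheorem3 (R : realType) (d : nat) (hd : (2 <= d)%N)
  (c : nat -> 'cV[R]_d) (omega : 'M[R]_d -> R) (C lambda0 : R)
  (V : nat -> 'M[R]_d) (lam : nat -> nat -> R) (vec : nat -> nat -> 'cV[R]_d) :
  (forall t, norm2 (c t) = 1) ->
  0 < C ->
  (forall X : 'M[R]_d, psd X -> 0 <= omega X /\ omega X <= C * Num.sqrt (lambda_max X)) ->
  2 <= lambda0 ->
  Num.sqrt (2 / (3 * (d%:R - 1))) * 2 * d%:R * C + 2 / (3 * (d%:R - 1)) <= lambda0 ->
  V 0%N = lambda0%:M ->
  (* (lam t i, vec t i), i < d, are the eigenvalues of V t in increasing order
     with corresponding orthonormal eigenvectors (0-based indexing) *)
  (forall t i, (i < d)%N -> V t *m vec t i = lam t i *: vec t i) ->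
  (forall t i j, (i < d)%N -> (j < d)%N ->
      ((vec t i)^T *m vec t j) 0 0 = (i == j)%:R) ->
  (forall t i j, (i <= j)%N -> (j < d)%N -> lam t i <= lam t j) ->
  (forall t, V t.+1 = V t + omega (V t) *:
      \sum_(0 <= i < d.-1)
        (proj_normalized (c t + (Num.sqrt (lam t 0%N))^-1 *: vec t i)
         + proj_normalized (c t - (Num.sqrt (lam t 0%N))^-1 *: vec t i))) ->
  forall t, Num.sqrt (2 / (3 * (d%:R - 1)) * lambda_max (V t)) <= lambda_min (V t).
Proof.
move=> c_norm C_gt0 omega_bound l0_ge2 l0_ge V0 V_vec vec_orth lam_sorted V_succ t.
have d_gt0 : (0 < d)%N := ltnW hd.
have [l0_le_lam0 k_lam_le] := lam_invariant hd c_norm C_gt0 omega_bound l0_ge2 l0_ge V0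
  V_vec vec_orth lam_sorted V_succ t.
have V_sym := V_sym V0 V_succ t.
have k_ge0 : 0 <= 2 / (3 * (d%:R - 1)) :> R by rewrite divr_ge0 ?mulr_ge0 // subr_ge0 ler1n ltnW.
have lam0_ge0 : 0 <= lam t 0 by apply: le_trans l0_le_lam0; apply: le_trans l0_ge2.
apply: le_trans (lambda_min_ge d_gt0 (V_vec t) (vec_orth t) (lam_sorted t) V_sym).
rewrite -(ger0_norm lam0_ge0) -sqrtr_sqr ler_wsqrtr // (le_trans _ k_lam_le) //.
by rewrite ler_wpM2l // (lambda_max_le d_gt0 (V_vec t) (vec_orth t) (lam_sorted t) V_sym).
Qed.
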